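(* Let $n\ge4$, let $C=\mathrm{circ}(1,0,\ldots,0,1)$ of order $n-1$, and let $X=2(CC^T+I_{n-1})^{-1}\left[ (n-1)I_{n-1}-J_{n-1}\right]$ and $Y= J_{n-1}+C^TX$ (these are the blocks of the Moore–Penrose inverse $M^+=\frac{1}{2(n-1)}\left[\begin{smallmatrix}2\mathbf{1} & X\\ -\mathbf{1} & Y\end{smallmatrix}\right]$ of the incidence matrix $M=\left[\begin{smallmatrix}\mathbf{1}^T & \mathbf{0}^T\\ I_{n-1} & C\end{smallmatrix}\right]$ of the wheel graph $W_n$). Then $X$ is a symmetric circulant matrix and $Y$ is a circulant matrix.
   Context: For $c_0,\dots,c_{k-1}$, $\mathrm{circ}(c_0,\ldots,c_{k-1})$ denotes the $k\times k$ circulant matrix whose $(i,j)$-entry is $c_{(j-i)\bmod k}$. $J_{n-1}$ is the $(n-1)\times(n-1)$ all-ones matrix, $I_{n-1}$ the identity, $\mathbf 1$ the all-ones vector. The matrix $CC^T+I_{n-1}=\mathrm{circ}(3,1,0,\ldots,0,1)$ is invertible. The wheel graph $W_n$ is a cycle on $n-1$ vertices together with a hub vertex adjacent to all cycle vertices. *)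

From mathcomp Require Import all_boot all_order all_algebra.
Set Implicit Arguments. Unset Strict Implicit. Unset Printing Implicit Defensive.
Import Order.TTheory GRing.Theory Num.Theory.
Local Open Scope ring_scope.

Definition circ (R : Type) (k : nat) (c : nat -> R) : 'M[R]_k :=
  \matrix_(i < k, j < k) c ((j + k - i) %% k)%N.

Definition is_circulant (R : Type) (k : nat) (A : 'M[R]_k) : Prop :=
  exists c : nat -> R, A = circ k c.

Definition wheelC (R : nzRingType) (k : nat) : 'M[R]_k :=
  circ k (fun d => if (d == 0)%N || (d == k.-1)%N then 1 else 0).

Definition Jmx (R : nzRingType) (k : nat) : 'M[R]_k := const_mx 1.

Definition wheelX (R : fieldType) (n : nat) : 'M[R]_(n.-1) :=
  let C := wheelC R n.-1 in
  2%:R *: (invmx (C *m C^T + 1%:M) *m ((n.-1)%:R *: 1%:M - Jmx R n.-1)).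

Definition wheelY (R : fieldType) (n : nat) : 'M[R]_(n.-1) :=
  Jmx R n.-1 + (wheelC R n.-1)^T *m wheelX R n.

From mathcomp Require Import all_boot all_order all_algebra.
From mathcomp Require Import ring.
Set Implicit Arguments. Unset Strict Implicit.
Import Order.TTheory GRing.Theory Num.Theory.
Local Open Scope ring_scope.

(* Circulant matrices of order k >= 2, indexed by the ring 'Z_k, are closed
   under sums, scalings, transposes and products, commute with each other,
   and are exactly the matrices commuting with the cyclic shift; the latter
   makes them closed under inversion as well.  So X and Y are circulant as
   they are built from C, I and J by these operations, and X is symmetric
   because its two factors are symmetric and commute. *)

Section Circulant.
Variable p : nat.
Local Notation k := p.+2.
Local Notation I := 'I_k.

Definition circulant (R : Type) (A : 'M[R]_k) := forall i j : I, A i j = A 0 (j - i).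

Lemma val_subZp (i j : I) : val (j - i) = ((j + k - i) %% k)%N.
Proof. by rewrite /= modnDmr addnBA // ltnW. Qed.

Lemma circulantP (R : Type) (A : 'M[R]_k) : circulant A <-> is_circulant A.
Proof.
split=> [hA | [c ->] i j]; last by rewrite !mxE -!val_subZp subr0.
exists (fun d => A 0 (inZp d)); apply/matrixP => i j.
by rewrite !mxE hA -val_subZp valZpK.
Qed.

Lemma circulant_circ (R : Type) (c : nat -> R) : circulant (circ k c).
Proof. by apply/circulantP; exists c. Qed.

Lemma circulant_const (R : Type) (a : R) : circulant (const_mx a).
Proof. by move=> i j; rewrite !mxE. Qed.

Section Ring.
Variable R : pzRingType.
Implicit Types A B : 'M[R]_k.

Lemma circulantD A B : circulant A -> circulant B -> circulant (A + B).
Proof. by move=> hA hB i j; rewrite !mxE hA hB. Qed.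

Lemma circulantN A : circulant A -> circulant (- A).
Proof. by move=> hA i j; rewrite !mxE hA. Qed.

Lemma circulantZ a A : circulant A -> circulant (a *: A).
Proof. by move=> hA i j; rewrite !mxE hA. Qed.

Lemma circulant_scalar (a : R) : circulant a%:M.
Proof. by move=> i j; rewrite !mxE eq_sym -subr_eq0 eq_sym. Qed.

Lemma circulantT A : circulant A -> circulant A^T.
Proof. by move=> hA i j; rewrite !mxE hA [in RHS]hA sub0r opprB. Qed.

Lemma circulantM A B : circulant A -> circulant B -> circulant (A *m B).
Proof.
move=> hA hB i j; rewrite !mxE (reindex_inj (addIr i)) /=.
apply: eq_bigr => l _.
by rewrite hA [B _ j]hB [B l _]hB addrK opprD addrA addrAC.
Qed.

Definition shift_mx : 'M[R]_k := \matrix_(i, j) (j - i == 1)%:R.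

Lemma circulant_shift : circulant shift_mx.
Proof. by move=> i j; rewrite !mxE subr0. Qed.

Lemma shift_mxE B (i j : I) :
  (shift_mx *m B) i j = B (i + 1) j /\ (B *m shift_mx) i j = B i (j - 1).
Proof.
rewrite !mxE; split.
  rewrite (bigD1 (i + 1)) //= big1 ?addr0 => [|l hl].
    by rewrite !mxE addrAC subrr add0r eqxx mul1r.
  by rewrite !mxE subr_eq (addrC 1 i) (negbTE hl) mul0r.
rewrite (bigD1 (j - 1)) //= big1 ?addr0 => [|l hl].
  by rewrite !mxE opprB addrA addrAC subrr add0r eqxx mulr1.
by rewrite !mxE subr_eq (addrC 1 l) -subr_eq eq_sym (negbTE hl) mulr0.
Qed.

Lemma circulant_comm_shift B : shift_mx *m B = B *m shift_mx -> circulant B.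
Proof.
move=> hB.
have stepB (i j : I) : B (i + 1) j = B i (j - 1).
  by have [<- <-] := shift_mxE B i j; rewrite hB.
suff Bnat t (j : I) : B t%:R j = B 0 (j - t%:R).
  by move=> i j; rewrite -{1}(natr_Zp i) Bnat natr_Zp.
elim: t j => [|t IH] j; first by rewrite subr0.
by rewrite -natr1 stepB IH opprD addrA addrAC.
Qed.

End Ring.

Section ComUnitRing.
Variable R : comUnitRingType.
Implicit Types A B : 'M[R]_k.

Lemma circulant_mulmxC A B : circulant A -> circulant B -> A *m B = B *m A.
Proof.
move=> hA hB; apply/matrixP => i j; rewrite !mxE.
have reflect_inj : injective (fun l : I => i + j - l).
  by move=> x y /addrI /oppr_inj.
rewrite (reindex_inj reflect_inj) /=; apply: eq_bigr => l _.
rewrite hA [B _ j]hB [B i _]hB [A _ j]hA mulrC.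
by congr (B 0 _ * A 0 _); ring.
Qed.

(* No invertibility is needed: invmx A = A when A is singular. *)
Lemma circulantV A : circulant A -> circulant (invmx A).
Proof.
move=> hA; apply: circulant_comm_shift.
have comm_shift : GRing.comm (shift_mx R) A.
  by rewrite /GRing.comm -!mulmxE circulant_mulmxC //; apply: circulant_shift.
by have := commrV comm_shift; rewrite /GRing.comm -!mulmxE.
Qed.

Lemma trmx_invmx_mul_sym A B :
    circulant A -> circulant B -> A^T = A -> B^T = B ->
  (invmx A *m B)^T = invmx A *m B.
Proof.
move=> hA hB symA symB.
by rewrite trmx_mul trmx_inv symA symB circulant_mulmxC //; apply: circulantV.
Qed.

End ComUnitRing.
End Circulant.

Theorem mainTheorem2 (R : realFieldType) (n : nat) (hn : (4 <= n)%N) :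
  (wheelX R n)^T = wheelX R n /\ is_circulant (wheelX R n) /\ is_circulant (wheelY R n).
Proof.
case: n hn => [|[|[|p]]] // _; rewrite /wheelY /wheelX /Jmx /=.
set C := wheelC R p.+2; set A := C *m C^T + 1%:M.
set B := _ *: 1%:M - const_mx 1.
have hC : circulant C := circulant_circ _.
have hA : circulant A := circulantD (circulantM hC (circulantT hC)) (circulant_scalar _).
have hB : circulant B :=
  circulantD (circulantZ _ (circulant_scalar _)) (circulantN (circulant_const _)).
have hX : circulant (2%:R *: (invmx A *m B)) :=
  circulantZ _ (circulantM (circulantV hA) hB).
split; [|split; apply/circulantP => //].
- rewrite linearZ /= trmx_invmx_mul_sym //.
    by rewrite /A linearD /= trmx_mul trmxK tr_scalar_mx.
  by rewrite /B linearB /= linearZ /= tr_scalar_mx trmx_const.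
- exact: circulantD (circulant_const _) (circulantM (circulantT hC) hX).
Qed.
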